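(* Let $m_1<\dots<m_k<m_{k+1}=n$ with $m_i\mid m_{i+1}$, $\alpha$ primitive in $\mathbb{F}_{q^n}$, $\alpha_i=\alpha^{(q^n-1)/(q^{m_i}-1)}$, $L_i=m_i/m_{i-1}$ ($2\le i\le k+1$), and $\mathcal{F}^i_j=\bigoplus_{t=0}^{j-1}\mathbb{F}_{q^{m_i}}\alpha_{i+1}^t$ for $1\le i\le k$, $1\le j\le L_{i+1}-1$. Let $\mathcal{F}=(\mathcal{F}^1_1,\dots,\mathcal{F}^1_{L_2-1},\mathcal{F}^2_1,\dots,\mathcal{F}^2_{L_3-1},\dots,\mathcal{F}^k_1,\dots,\mathcal{F}^k_{L_{k+1}-1})$, a flag of type $(m_1,\dots,m_2-m_1,m_2,\dots,m_3-m_2,\dots,m_k,\dots,n-m_k)$. Then for each $1\le i\le k$ the subspace of $\mathcal{F}$ of dimension $m_i$ is the subfield $\mathbb{F}_{q^{m_i}}$ (so, if some subspace of $\mathcal{F}$ is not a field, $\mathcal{F}$ generalizes the Galois flag $(\mathbb{F}_{q^{m_1}},\dots,\mathbb{F}_{q^{m_k}})$); $\mathcal{F}$ has best friend $\mathbb{F}_{q^{m_1}}$; $|\mathrm{Orb}(\mathcal{F})|=\frac{q^n-1}{q^{m_1}-1}$; and $d_f(\mathrm{Orb}(\mathcal{F}))=2(m_2-m_1)$.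
   Context: $q$ prime power; subspaces are $\mathbb{F}_q$-subspaces of $\mathbb{F}_{q^n}$; a flag is a chain $\{0\}\subsetneq\mathcal{F}_1\subsetneq\cdots\subsetneq\mathcal{F}_r\subsetneq\mathbb{F}_{q^n}$ with type its vector of dimensions. $d_S(\mathcal{U},\mathcal{V})=\dim(\mathcal{U}+\mathcal{V})-\dim(\mathcal{U}\cap\mathcal{V})$, $d_f(\mathcal{F},\mathcal{F}')=\sum_i d_S(\mathcal{F}_i,\mathcal{F}'_i)$, $\mathrm{Orb}(\mathcal{F})=\{\mathcal{F}\alpha^j:j\ge0\}$ with $\mathcal{F}\alpha^j=(\mathcal{F}_1\alpha^j,\dots)$; minimum distance is the minimum $d_f$ between distinct codewords. A subfield $\mathbb{F}_{q^m}$ is a friend of a subspace if the subspace is an $\mathbb{F}_{q^m}$-vector space; the best friend of a flag is the largest subfield that is a friend of all its subspaces. A flag generalizes the Galois flag $(\mathbb{F}_{q^{t_1}},\dots,\mathbb{F}_{q^{t_r}})$ if this chain of subfields is a subflag of it and at least one of its subspaces is not a subfield. *)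

(* F_{q^n} is modelled as a finite field L with #|L| = q^n;
   subspaces are subsets of L that are F_q-subspaces, where
   F_q = Fsub q 1 = {x | x^q = x}. *)
From HB Require Import structures.
From mathcomp Require Import all_boot all_order all_algebra all_field.
Set Implicit Arguments. Unset Strict Implicit. Unset Printing Implicit Defensive.
Import GRing.Theory.
Local Open Scope ring_scope.

Section FlagDefs.
Variable L : finFieldType.
Variable q : nat.

Definition Fsub (m : nat) : {set L} := [set x : L | x ^+ (q ^ m) == x].

Definition subspace (U : {set L}) : bool :=
  [&& 0 \in U,
      [forall x in U, forall y in U, x + y \in U] &
      [forall c in Fsub 1, forall x in U, c * x \in U]].

Definition sdim (U : {set L}) : nat := trunc_log q #|U|.

Definition addS (U V : {set L}) : {set L} := [set u + v | u in U, v in V].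

Definition dS (U V : {set L}) : nat := (sdim (addS U V) - sdim (U :&: V))%N.

Definition df (F F' : seq {set L}) : nat :=
  (\sum_(i < size F) dS (nth set0 F i) (nth set0 F' i))%N.

Definition is_flag (F : seq {set L}) : bool :=
  [&& all subspace F, all (fun U => U != [set 0]) F,
      all (fun U => U != [set: L]) F & sorted (fun U V : {set L} => U \proper V) F].

Definition type_of (F : seq {set L}) : seq nat := map sdim F.

Definition flag_mul (F : seq {set L}) (a : L) : seq {set L} :=
  [seq [set x * a | x in U] | U : {set L} <- F].

Definition in_orb (F : seq {set L}) (a : L) (G : seq {set L}) : Prop :=
  exists j : nat, G = flag_mul F (a ^+ j).

Definition orb_card (F : seq {set L}) (a : L) (N : nat) : Prop :=
  exists s : seq (seq {set L}),
    [/\ uniq s, (forall G, G \in s <-> in_orb F a G) & size s = N].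

Definition orb_min_dist (F : seq {set L}) (a : L) (d : nat) : Prop :=
  (exists G G', [/\ in_orb F a G, in_orb F a G', G <> G' & df G G' = d]) /\
  (forall G G', in_orb F a G -> in_orb F a G' -> G <> G' -> (d <= df G G')%N).

Definition primitive (a : L) : Prop :=
  forall x : L, x != 0 -> exists j : nat, x = a ^+ j.

Definition is_subfield (U : {set L}) : bool :=
  [&& 0 \in U, 1 \in U,
      [forall x in U, forall y in U, (x - y \in U) && (x * y \in U)] &
      [forall x in U, x^-1 \in U]].

Definition friend (U : {set L}) (m : nat) : bool :=
  subspace U && [forall c in Fsub m, forall x in U, c * x \in U].

Definition best_friend (n : nat) (F : seq {set L}) (m : nat) : Prop :=
  [/\ (m %| n)%N, all (fun U => friend U m) F &
      forall m', (m' %| n)%N -> all (fun U => friend U m') F -> (m' <= m)%N].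

Definition generalizes (F : seq {set L}) (ts : seq nat) : Prop :=
  subseq [seq Fsub t | t <- ts] F /\ exists2 U, U \in F & ~~ is_subfield U.

Definition Fij (mi : nat) (b : L) (j : nat) : {set L} :=
  [set x : L | [exists c : {ffun 'I_j -> L},
     [forall t, c t \in Fsub mi] && (x == \sum_(t < j) c t * b ^+ t)]].

Definition alpha_i (n : nat) (a : L) (mi : nat) : L :=
  a ^+ ((q ^ n - 1) %/ (q ^ mi - 1)).

Definition theFlag (n k : nat) (m : nat -> nat) (a : L) : seq {set L} :=
  flatten [seq [seq Fij (m i) (alpha_i n a (m i.+1)) j
                | j <- iota 1 (m i.+1 %/ m i - 1)] | i <- iota 1 k].

Definition theType (k : nat) (m : nat -> nat) : seq nat :=
  flatten [seq [seq (j * m i)%N | j <- iota 1 (m i.+1 %/ m i - 1)] | i <- iota 1 k].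

End FlagDefs.

(* Write K_i for the subfield F_{q^{m_i}} and beta_i = alpha_{i+1}, a generator
   of F_{q^{m_{i+1}}}^*.  Since [F_{q^{m_{i+1}}} : K_i] = L_{i+1}, the powers
   1, beta_i, ..., beta_i^{L_{i+1}-1} are K_i-linearly independent.  Hence
   F^i_j has dimension j m_i, F^i_1 = K_i, and the last subspace of a block lies
   in the first one of the next: the flag has the announced type.  Every F^i_j
   is a K_1-space and K_1 occurs in the flag, so K_1 is the best friend and the
   orbit of the flag has the size of the orbit of K_1.  For the distance, blocks
   i >= 2 are invariant under alpha_2, while c F^1_j = F^1_j forces c in K_1 (by
   independence again), so distinct orbit elements differ in every member of the
   first block; two distinct K_1-spaces of equal dimension are at distance at
   least 2 m_1, and F^1_j, beta_1 F^1_j are at distance exactly 2 m_1.  Summing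
   over the L_2 - 1 members of the first block gives 2 (m_2 - m_1). *)

From HB Require Import structures.
From mathcomp Require Import all_boot all_order all_algebra all_field.
(* Imported before Defs: fingroup also defines a [primitive]. *)
From mathcomp Require Import all_fingroup all_solvable zify.
From Pilot Require Import Defs.
From mathcomp.algebra_tactics Require Import ring.
Set Implicit Arguments. Unset Strict Implicit. Unset Printing Implicit Defensive.
Import GRing.Theory.
Local Open Scope ring_scope.

Definition Kspace (L : finFieldType) (K V : {set L}) : Prop :=
  [/\ 0 \in V, forall x y, x \in V -> y \in V -> x + y \in V
    & forall c x, c \in K -> x \in V -> c * x \in V].

Lemma sorted_iota (e : rel nat) m0 r :
  (forall i, (m0 <= i)%N -> (i.+1 < m0 + r)%N -> e i i.+1) -> sorted e (iota m0 r).
Proof.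
elim: r m0 => [//|r IH] m0 h; case: r IH h => [//|r] IH h /=.
rewrite h ?leqnn ?addnS ?ltnS ?leq_addr //=.
have := IH m0.+1; rewrite /=; apply=> i hi hi2; apply: h; first exact: ltnW.
by rewrite addnS -addSn.
Qed.

Lemma sorted_flatten (T : eqType) (x0 : T) (r : rel T) (ss : seq (seq T)) :
  all (fun s => sorted r s && (s != [::])) ss ->
  sorted (fun s t => r (last x0 s) (head x0 t)) ss -> sorted r (flatten ss).
Proof.
elim: ss => [//|s ss IH] /= /andP [/andP [hs hne] hall] hsort.
have IH' := IH hall (path_sorted hsort).
case: s hs hne hsort => [//|x s] hs _ hsort.
rewrite /= cat_path; move: hs => /= -> /=.
case: ss hall hsort IH' {IH} => [//|t ss'] /= /andP [/andP [_ hne'] _] /andP [hxt _].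
by case: t hne' hxt => [//|y t] _ /= ->.
Qed.

Lemma subseq_map_heads (A T : eqType) (g : A -> T) (h : A -> seq T) (s : seq A) :
  (forall x, x \in s -> exists t, h x = g x :: t) ->
  subseq (map g s) (flatten (map h s)).
Proof.
elim: s => [//|x s IH] hx /=.
have [t ->] := hx x (mem_head _ _).
rewrite /= eqxx; apply: subseq_trans (IH _) (suffix_subseq _ _).
by move=> y hy; apply: hx; rewrite in_cons hy orbT.
Qed.

Lemma last_map_iota (T : Type) (x0 : T) (f : nat -> T) a r :
  last x0 (map f (iota a r.+1)) = f (a + r)%N.
Proof. by rewrite -addn1 iotaD map_cat last_cat. Qed.

Section FiniteField.
Variable L : finFieldType.
Variables q n : nat.
Hypothesis hq : (1 < q)%N.
Hypothesis hL : #|L| = (q ^ n)%N.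
Hypothesis hn1 : (1 < n)%N.
Variable alpha : L.
Hypothesis halpha : primitive alpha.
Let hn : (0 < n)%N := ltnW hn1.

Lemma pnat_pchar_expq d : ([pchar L]%R).-nat (q ^ d)%N.
Proof.
have [p pr_p chp] := finPcharP L.
have pg : p.-nat (q ^ n)%N.
  rewrite -hL; have := abelem_pgroup (fin_ring_pchar_abelem chp).
  by rewrite /pgroup cardsT.
have pq : p.-nat q by move: pg; rewrite pnatX => /orP[//|/eqP n0]; move: hn; rewrite n0.
apply: (@sub_in_pnat p) => [r _|]; last by rewrite pnatX pq.
by rewrite inE /= => /eqP ->.
Qed.

Lemma exprqD d (x y : L) : (x + y) ^+ (q ^ d) = x ^+ (q ^ d) + y ^+ (q ^ d).
Proof. exact: exprDn_pchar (pnat_pchar_expq d). Qed.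

Lemma inFsub d (x : L) : (x \in Fsub L q d) = (x ^+ (q ^ d) == x).
Proof. by rewrite inE. Qed.

Lemma Fsub0 d : (0 : L) \in Fsub L q d.
Proof. by rewrite inFsub expr0n expn_eq0 eqn0Ngt (ltnW hq). Qed.

Lemma Fsub1 d : (1 : L) \in Fsub L q d.
Proof. by rewrite inFsub expr1n. Qed.

Lemma FsubD d (x y : L) : x \in Fsub L q d -> y \in Fsub L q d -> x + y \in Fsub L q d.
Proof. by rewrite !inFsub exprqD => /eqP-> /eqP->. Qed.

Lemma FsubM d (x y : L) : x \in Fsub L q d -> y \in Fsub L q d -> x * y \in Fsub L q d.
Proof. by rewrite !inFsub exprMn => /eqP-> /eqP->. Qed.

Lemma FsubV d (x : L) : x \in Fsub L q d -> x^-1 \in Fsub L q d.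
Proof. by rewrite !inFsub exprVn => /eqP->. Qed.

Lemma FsubN1 d : (-1 : L) \in Fsub L q d.
Proof.
rewrite inFsub; apply/eqP.
have := exprqD d 1 (-1); rewrite subrr expr0n expn_eq0 eqn0Ngt (ltnW hq) /= expr1n.
by move/eqP; rewrite eq_sym addrC addr_eq0 => /eqP.
Qed.

Lemma FsubN d (x : L) : x \in Fsub L q d -> - x \in Fsub L q d.
Proof. by move=> hx; rewrite -mulN1r FsubM ?FsubN1. Qed.

Lemma FsubB d (x y : L) : x \in Fsub L q d -> y \in Fsub L q d -> x - y \in Fsub L q d.
Proof. by move=> hx hy; rewrite FsubD ?FsubN. Qed.

Lemma Fsub_subset d e : (d %| e)%N -> Fsub L q d \subset Fsub L q e.
Proof.
case/dvdnP=> t ->; apply/subsetP => x; rewrite !inFsub => /eqP hx.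
elim: t => [|t IH]; first by rewrite mul0n expn0 expr1.
by rewrite mulSn expnD exprM hx.
Qed.

Local Notation M := (q ^ n - 1)%N.

Lemma expq_gt1 d : (0 < d)%N -> (1 < q ^ d)%N.
Proof. by move=> hd; rewrite -{1}(expn0 q) ltn_exp2l. Qed.

Lemma M_gt0 : (0 < M)%N.
Proof. by rewrite subn_gt0 expq_gt1 // ltnW. Qed.

(* With n > 1, L has at least 4 elements, so 0 cannot be primitive. *)
Lemma alpha_neq0 : alpha != 0.
Proof.
apply/eqP => a0.
have : (#|[set~ (0:L)%R]| <= 1)%N.
  rewrite -(cards1 (1:L)%R); apply: subset_leq_card; apply/subsetP => x.
  rewrite !inE => hx; have [j xj] := halpha hx.
  move: hx; rewrite xj a0; case: j {xj} => [|j]; rewrite ?expr0 ?exprS ?mul0r ?eqxx //.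
rewrite cardsC1 hL; apply/negP; rewrite -ltnNge.
have h4 : (q ^ 2 <= q ^ n)%N by rewrite leq_exp2l // ltnW.
have : (4 <= q ^ 2)%N by rewrite expnS expn1 (@leq_mul 2 2).
move=> h; rewrite -subn1 ltn_subRL; exact: leq_trans (leq_trans _ h) h4.
Qed.

Lemma exp_alpha_neq0 a : alpha ^+ a != 0.
Proof. by rewrite expf_neq0 // alpha_neq0. Qed.

Lemma exp_alphaM : alpha ^+ M = 1.
Proof.
have := expf_card alpha; rewrite hL -{1}(subnK (ltnW (expq_gt1 hn))) addn1 exprSr.
by move=> e; apply: (mulIf alpha_neq0); rewrite mul1r.
Qed.

Lemma exp_alpha_mod a : alpha ^+ a = alpha ^+ (a %% M).
Proof. by rewrite {1}(divn_eq a M) exprD mulnC exprM exp_alphaM expr1n mul1r. Qed.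

Lemma exp_alpha_inj a b : (a < M)%N -> (b < M)%N -> alpha ^+ a = alpha ^+ b -> a = b.
Proof.
move=> ha hb e.
pose f := fun i : 'I_M => alpha ^+ i.
have himg : [set~ (0:L)%R] \subset f @: [set: 'I_M].
  apply/subsetP => x; rewrite !inE => hx; have [j ->] := halpha hx.
  apply/imsetP; exists (Ordinal (ltn_pmod j M_gt0)); first by rewrite inE.
  by rewrite /f /= -exp_alpha_mod.
have hc : #|f @: [set: 'I_M]| == #|[set: 'I_M]|.
  rewrite eqn_leq leq_imset_card /= cardsT card_ord.
  by have := subset_leq_card himg; rewrite cardsC1 hL; apply: leq_trans; rewrite subn1.
by have := imset_injP hc (Ordinal ha) (Ordinal hb) (in_setT _) (in_setT _) e => -[].
Qed.

Lemma eq_exp_alpha a b : (alpha ^+ a == alpha ^+ b) = (a == b %[mod M]).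
Proof.
apply/eqP/eqP => [e|e]; last by rewrite exp_alpha_mod e -exp_alpha_mod.
by apply: exp_alpha_inj; rewrite ?ltn_pmod ?M_gt0 // -!exp_alpha_mod.
Qed.

(* The index of F_{q^d}^* in L^*; alpha ^+ unit_index d generates F_{q^d}^*. *)
Definition unit_index d := (M %/ (q ^ d - 1))%N.

Lemma dvdn_expq_sub1 d : (d %| n)%N -> (q ^ d - 1 %| M)%N.
Proof.
case/dvdnP=> t ->; elim: t => [|t IH]; first by rewrite mul0n expn0 subnn dvdn0.
have e : (q ^ (t.+1 * d) - 1 = (q ^ d - 1) * q ^ (t * d) + (q ^ (t * d) - 1))%N.
  rewrite mulSn expnD.
  have : (0 < q ^ (t * d))%N by rewrite expn_gt0 ltnW.
  have : (0 < q ^ d)%N by rewrite expn_gt0 ltnW.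
  move: (q ^ d)%N (q ^ (t * d))%N => X Y hX hY; nia.
by rewrite e dvdn_add // dvdn_mulr.
Qed.

Lemma mul_unit_index d : (d %| n)%N -> M = (unit_index d * (q ^ d - 1))%N.
Proof. by move=> hd; rewrite divnK // dvdn_expq_sub1. Qed.

Lemma expq_sub1_gt0 d : (0 < d)%N -> (0 < q ^ d - 1)%N.
Proof. by move=> hd; rewrite subn_gt0 expq_gt1. Qed.

Lemma unit_index_gt0 d : (d %| n)%N -> (0 < unit_index d)%N.
Proof. by move=> hd; have := M_gt0; rewrite (mul_unit_index hd) muln_gt0 => /andP[]. Qed.

Lemma exp_alpha_Fsub d t : (0 < d)%N -> (d %| n)%N ->
  (alpha ^+ t \in Fsub L q d) = (unit_index d %| t)%N.
Proof.
move=> hd hdn; rewrite inFsub -exprM eq_exp_alpha eqn_mod_dvd; last first.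
  by rewrite leq_pmulr // expn_gt0 ltnW.
by rewrite -{2}(muln1 t) -mulnBr (mul_unit_index hdn) dvdn_pmul2r // expq_sub1_gt0.
Qed.

Lemma card_Fsub d : (0 < d)%N -> (d %| n)%N -> #|Fsub L q d| = (q ^ d)%N.
Proof.
move=> hd hdn; have hNd := unit_index_gt0 hdn.
pose P := [set alpha ^+ (unit_index d * s) | s : 'I_(q ^ d - 1)].
have hlt s : (s < q ^ d - 1)%N -> (unit_index d * s < M)%N.
  by move=> hs; rewrite (mul_unit_index hdn) ltn_pmul2l.
have -> : Fsub L q d = 0 |: P.
  apply/setP => x; case: (eqVneq x 0) => [->|nx]; first by rewrite Fsub0 // setU11.
  rewrite in_setU1 (negPf nx) /=.
  have [j ->] := halpha nx; rewrite exp_alpha_mod exp_alpha_Fsub //.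
  apply/idP/imsetP.
  - move=> /dvdnP [s hs].
    have hsl : (s < q ^ d - 1)%N.
      rewrite -(ltn_pmul2r hNd) -hs [X in (_ < X)%N]mulnC -(mul_unit_index hdn).
      by rewrite ltn_pmod // M_gt0.
    by exists (Ordinal hsl); rewrite ?inE // hs mulnC.
  - case=> s _ e; have := exp_alpha_inj (ltn_pmod j M_gt0) (hlt _ (ltn_ord s)) e.
    by move=> ->; rewrite dvdn_mulr.
rewrite cardsU1 card_in_imset.
  rewrite card_ord; have -> : (0 \notin P) = true.
    by apply/negP => /imsetP [s _ e]; move: (exp_alpha_neq0 (unit_index d * s)); rewrite -e eqxx.
  by rewrite /= add1n -subSn ?subn1 // ltnW // expq_gt1.
move=> s s' _ _ /= e; apply/val_inj => /=.
have := exp_alpha_inj (hlt _ (ltn_ord s)) (hlt _ (ltn_ord s')) e.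
by move/eqP; rewrite eqn_pmul2l // => /eqP.
Qed.

Section Span.
Variable a : nat.
Variable b : L.
Local Notation K := (Fsub L q a).

Lemma memFij j x : reflect (exists c : {ffun 'I_j -> L},
   (forall t, c t \in K) /\ x = \sum_(t < j) c t * b ^+ t) (x \in Fij q a b j).
Proof.
rewrite inE; apply: (iffP existsP) => [[c /andP[/forallP h /eqP e]]|[c [h e]]].
  by exists c.
by exists c; rewrite e eqxx andbT; apply/forallP.
Qed.

Lemma Fij_Kspace j : Kspace K (Fij q a b j).
Proof.
split.
- apply/memFij; exists [ffun _ => 0]; split=> [t|]; rewrite ?ffunE ?Fsub0 //.
  by rewrite big1 // => t _; rewrite ffunE mul0r.
- move=> x y /memFij [c [hc ->]] /memFij [d [hd ->]]; apply/memFij.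
  exists [ffun t => c t + d t]; split=> [t|]; rewrite ?ffunE ?FsubD //.
  rewrite [RHS](eq_bigr (fun t => c t * b ^+ t + d t * b ^+ t)) => [|t _].
    by rewrite big_split.
  by rewrite ffunE mulrDl.
- move=> c0 x h0 /memFij [c [hc ->]]; apply/memFij.
  exists [ffun t => c0 * c t]; split=> [t|]; rewrite ?ffunE ?FsubM //.
  by rewrite mulr_sumr; apply: eq_bigr => t _; rewrite ffunE mulrA.
Qed.

Lemma Fij_min j (V : {set L}) : Kspace K V ->
  (forall t, (t < j)%N -> b ^+ t \in V) -> Fij q a b j \subset V.
Proof.
case=> h0 hD hM hb; apply/subsetP => x /memFij [c [hc ->]].
by apply: (big_ind (fun x => x \in V)) => // t _; apply: hM => //; apply: hb.
Qed.

Lemma exp_Fij j t : (t < j)%N -> b ^+ t \in Fij q a b j.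
Proof.
move=> ht; apply/memFij.
exists [ffun u : 'I_j => if val u == t then 1 else 0]; split=> [u|].
  by rewrite ffunE; case: ifP; rewrite ?Fsub0 ?Fsub1.
rewrite (bigD1 (Ordinal ht)) //= ffunE eqxx mul1r big1 ?addr0 // => u hu.
rewrite ffunE; case: ifP; rewrite ?mul0r // => /eqP e.
by move: hu; rewrite -val_eqE /= e eqxx.
Qed.

Lemma Fij1 : Fij q a b 1 = K.
Proof.
apply/setP => x; apply/memFij/idP => [[c [hc ->]]|hx].
  by rewrite big_ord1 expr0 mulr1.
by exists [ffun _ => x]; split=> [t|]; rewrite ?ffunE // big_ord1 ffunE expr0 mulr1.
Qed.

Lemma Fij_subset j j' : (j <= j')%N -> Fij q a b j \subset Fij q a b j'.
Proof.
move=> hj; apply: Fij_min; first exact: Fij_Kspace.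
by move=> t ht; apply: exp_Fij; exact: leq_trans ht hj.
Qed.

Lemma Fij_polyP j x : x \in Fij q a b j <->
  exists p : {poly L}, [/\ forall i, p`_i \in K, (size p <= j)%N & x = p.[b]].
Proof.
split.
  move=> /memFij [c [hc ->]].
  exists (\poly_(t < j) (if insub t is Some u then c u else 0)); split.
  - move=> i; rewrite coef_poly; case: ifP => _; last exact: Fsub0.
    by case: insubP => [u _ _|_] //; exact: Fsub0.
  - exact: size_poly.
  - by rewrite horner_poly; apply: eq_bigr => t _; rewrite valK.
case=> p [hp hs ->]; apply/memFij.
exists [ffun t : 'I_j => p`_t]; split=> [t|]; rewrite ?ffunE //.
by rewrite (horner_coef_wide _ hs); apply: eq_bigr => t _; rewrite ffunE.
Qed.

Lemma card_Fij_leq j : (a %| n)%N -> (0 < a)%N -> (#|Fij q a b j| <= q ^ (a * j))%N.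
Proof.
move=> han ha.
pose f := fun c : {ffun 'I_j -> L} => \sum_(t < j) c t * b ^+ t.
have sub : Fij q a b j \subset f @: ffun_on K.
  apply/subsetP => x /memFij [c [hc ->]]; apply/imsetP; exists c => //.
  by apply/ffun_onP.
apply: leq_trans (subset_leq_card sub) _; apply: leq_trans (leq_imset_card _ _) _.
by rewrite card_ffun_on card_ord card_Fsub // expnM.
Qed.

Lemma card_Fij_free j : (a %| n)%N -> (0 < a)%N ->
  (forall c : {ffun 'I_j -> L}, (forall t, c t \in K) ->
     \sum_(t < j) c t * b ^+ t = 0 -> forall t, c t = 0) ->
  #|Fij q a b j| = (q ^ (a * j))%N.
Proof.
move=> han ha hind.
pose f := fun c : {ffun 'I_j -> L} => \sum_(t < j) c t * b ^+ t.
have -> : Fij q a b j = f @: ffun_on K.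
  apply/setP => x; apply/memFij/imsetP => [[c [hc ->]]|[c /ffun_onP hc ->]].
    by exists c => //; apply/ffun_onP.
  by exists c.
rewrite card_in_imset; first by rewrite card_ffun_on card_ord card_Fsub // expnM.
move=> c d /ffun_onP hc /ffun_onP hd /= hcd; apply/ffunP => t.
have hK u : [ffun u => c u - d u] u \in K by rewrite ffunE FsubB.
have h0 : \sum_(u < j) [ffun u => c u - d u] u * b ^+ u = 0.
  transitivity (f c - f d); last by rewrite hcd subrr.
  by rewrite /f -sumrB; apply: eq_bigr => u _; rewrite ffunE mulrBl.
by have /eqP := hind _ hK h0 t; rewrite ffunE subr_eq0 => /eqP.
Qed.

End Span.

Section Independence.
Variables a e : nat.
Hypothesis ha : (0 < a)%N.
Hypothesis he : (0 < e)%N.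
Hypothesis hae : (a %| e)%N.
Hypothesis hen : (e %| n)%N.
Let han : (a %| n)%N := dvdn_trans hae hen.
Local Notation K := (Fsub L q a).
Local Notation beta := (alpha ^+ unit_index e).
Local Notation Lr := (e %/ a)%N.

Lemma Fij_exp_closed d : beta ^+ d \in Fij q a beta d ->
  forall u, beta ^+ u \in Fij q a beta d.
Proof.
move=> hd.
set V := [set x | beta * x \in Fij q a beta d].
have memV x : (x \in V) = (beta * x \in Fij q a beta d) by rewrite in_set.
have sub : Fij q a beta d \subset V.
  apply: Fij_min.
    have [h0 hD hM] := Fij_Kspace a beta d.
    split; first by rewrite memV mulr0.
      by move=> x y; rewrite !memV mulrDr; apply: hD.
    by move=> c x hc; rewrite !memV mulrCA; apply: hM.
  move=> t ht; rewrite memV -exprS.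
  case: (ltnP t.+1 d) => h; first exact: exp_Fij.
  by have -> : t.+1 = d by apply/eqP; rewrite eqn_leq h ht.
elim=> [|u IH].
  by case: (posnP d) => [d0|dp]; [move: hd; rewrite d0 | apply: exp_Fij].
by rewrite exprS; have := subsetP sub _ IH; rewrite memV.
Qed.

Lemma exp_beta_inj u v : (u < q ^ e - 1)%N -> (v < q ^ e - 1)%N ->
  beta ^+ u = beta ^+ v -> u = v.
Proof.
move=> hu hv; rewrite -!exprM => h.
have hlt w : (w < q ^ e - 1)%N -> (unit_index e * w < q ^ n - 1)%N.
  by move=> hw; rewrite (mul_unit_index hen) ltn_pmul2l // unit_index_gt0.
have /eqP := exp_alpha_inj (hlt _ hu) (hlt _ hv) h.
by rewrite eqn_pmul2l ?unit_index_gt0 // => /eqP.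
Qed.

Lemma expq_leq_card_closed (V : {set L}) :
  0 \in V -> (forall u, beta ^+ u \in V) -> (q ^ e <= #|V|)%N.
Proof.
move=> h0 hV.
pose P := [set beta ^+ val u | u : 'I_(q ^ e - 1)].
have sub : 0 |: P \subset V.
  by apply/subsetP => x; rewrite in_setU1 => /orP[/eqP->//|/imsetP[u _ ->]].
apply: leq_trans (subset_leq_card sub); rewrite cardsU1 card_in_imset.
  rewrite card_ord; have -> : (0 \notin P) = true.
    apply/negP => /imsetP [s _ e']; move: (exp_alpha_neq0 (unit_index e * s)).
    by rewrite exprM -e' eqxx.
  by rewrite /= add1n -subSn ?subn1 // ltnW // expq_gt1.
by move=> u v _ _ /= h; apply/val_inj; exact: exp_beta_inj (ltn_ord u) (ltn_ord v) h.
Qed.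

(* If p has degree d < e/a and p(beta) = 0, then beta^d lies in the span of
   the lower powers, which therefore contains all q^e - 1 powers of beta. *)
Lemma beta_free (p : {poly L}) : (forall i, p`_i \in K) -> (size p <= Lr)%N ->
  p.[beta] = 0 -> p = 0.
Proof.
move=> hp hs h; apply/eqP; apply/negP => /negP pn0.
set d := (size p).-1.
have hsd : size p = d.+1 by rewrite /d prednK // size_poly_gt0.
have hl : p`_d != 0 by rewrite -/(lead_coef p) lead_coef_eq0.
have hbd : beta ^+ d \in Fij q a beta d.
  apply/memFij; exists [ffun t : 'I_d => - ((p`_d)^-1 * p`_t)]; split.
    by move=> t; rewrite ffunE FsubN // FsubM // FsubV.
  move: h; rewrite horner_coef hsd big_ord_recr /= => /eqP; rewrite addr_eq0 => /eqP h.
  transitivity (- (p`_d)^-1 * \sum_(i < d) p`_i * beta ^+ i).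
    by rewrite h mulrN mulNr opprK mulrA mulVf // mul1r.
  by rewrite mulr_sumr; apply: eq_bigr => t _; rewrite ffunE mulrA mulNr.
have [h0 _ _] := Fij_Kspace a beta d.
have := leq_trans (expq_leq_card_closed h0 (Fij_exp_closed hbd))
                  (card_Fij_leq beta d han ha).
rewrite leq_exp2l // => hle.
have hdl : (d < Lr)%N by rewrite -hsd.
have : (a * d < e)%N by rewrite mulnC -(divnK hae) ltn_pmul2r.
by rewrite ltnNge hle.
Qed.

Lemma card_Fij j : (j <= Lr)%N -> #|Fij q a beta j| = (q ^ (a * j))%N.
Proof.
move=> hj; apply: card_Fij_free => // c hc h0 t.
pose p := \poly_(t < j) (if insub t is Some u then c u else 0).
have hpc i : p`_i \in K.
  rewrite coef_poly; case: ifP => _; last exact: Fsub0.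
  by case: insubP => [u _ _|_] //; exact: Fsub0.
have : p = 0.
  apply: beta_free => //; first exact: leq_trans (size_poly _ _) hj.
  by rewrite horner_poly -[RHS]h0; apply: eq_bigr => u _; rewrite valK.
move/(congr1 (fun r : {poly L} => r`_t)); rewrite coef_poly ltn_ord coef0.
by rewrite valK.
Qed.

Lemma beta_notin_Fsub : (1 < Lr)%N -> beta \notin K.
Proof.
move=> hL2; apply/negP => hb.
have := @beta_free ('X - beta%:P).
rewrite hornerXsubC subrr => /(_ _ _ erefl) h.
have : 'X - beta%:P != 0 :> {poly L} by rewrite polyXsubC_eq0.
rewrite h ?eqxx //; last by rewrite size_XsubC.
move=> i; rewrite coefB coefX coefC.
by case: (i == 1)%N; case: (i == 0)%N;
  rewrite ?subrr ?sub0r ?subr0 ?FsubN ?Fsub0 ?Fsub1 // FsubB // Fsub1.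
Qed.

(* If c F_j <= F_j with c = r(beta), deg r = d > 0, then beta^(j-d) c is in F_j,
   i.e. X^(j-d) r - s vanishes at beta for some s of size <= j; by freeness its
   coefficient of X^j, the leading coefficient of r, would be 0. *)
Lemma Fij_stabilizer j (c : L) : (0 < j)%N -> (j < Lr)%N ->
  [set x * c | x in Fij q a beta j] \subset Fij q a beta j -> c \in K.
Proof.
move=> hj0 hjL hsub.
have mem x : x \in Fij q a beta j -> x * c \in Fij q a beta j.
  by move=> hx; apply: (subsetP hsub); apply: imset_f.
have : c \in Fij q a beta j by rewrite -[c]mul1r mem // -(expr0 beta) exp_Fij.
case/Fij_polyP => r [hr hsr hc].
case: (leqP (size r) 1) => hs1.
  by rewrite hc (size1_polyC hs1) hornerC.
set d := (size r).-1.
have hsd : size r = d.+1 by rewrite /d prednK // ltnW.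
have hd1 : (0 < d)%N by rewrite -ltnS -hsd.
have hdj : (d < j)%N by rewrite -ltnS -hsd.
have hy : beta ^+ (j - d) * c \in Fij q a beta j.
  by apply: mem; apply: exp_Fij; rewrite ltn_subrL hd1.
case/Fij_polyP: hy => s [hs hss hys].
pose P := 'X^(j - d) * r - s.
have hP : P = 0.
  apply: beta_free.
  - move=> i; rewrite coefB coefXnM; case: ifP => _; last exact: FsubB.
    by rewrite sub0r FsubN.
  - apply: leq_trans (size_polyD _ _) _; rewrite size_polyN geq_max.
    apply/andP; split; last exact: leq_trans hss (ltnW hjL).
    apply: leq_trans (size_polyMleq _ _) _; rewrite size_polyXn hsd.
    by rewrite addnS /= addSn subnK ?(ltnW hdj).
  - by rewrite /P hornerD hornerN hornerM hornerXn -hc -hys subrr.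
have := congr1 (fun p : {poly L} => p`_j) hP.
rewrite /P coefB coefXnM ltnNge leq_subr /= subKn ?(ltnW hdj) // coef0.
rewrite (nth_default _ hss) subr0 => hrd.
have : lead_coef r != 0 by rewrite lead_coef_eq0 -size_poly_gt0 hsd.
by rewrite /lead_coef -/d hrd eqxx.
Qed.

End Independence.

Lemma df_map (f g : {set L} -> {set L}) X :
  df q (map f X) (map g X) = (\sum_(U <- X) dS q (f U) (g U))%N.
Proof.
elim: X => [|x X IH]; first by rewrite /df big_nil big_ord0.
by rewrite /df /= big_ord_recl big_cons -IH.
Qed.

Definition mulset (U : {set L}) (c : L) := [set x * c | x in U].

Lemma card_mulset U c : c != 0 -> #|mulset U c| = #|U|.
Proof. by move=> hc; rewrite card_imset //; exact: mulIf. Qed.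

Lemma mulset1 U : mulset U 1 = U.
Proof. by rewrite /mulset (eq_imset _ (@mulr1 _)) imset_id. Qed.

Lemma mulsetM U c d : mulset U (c * d) = mulset (mulset U c) d.
Proof. by rewrite /mulset -imset_comp; apply: eq_imset => x /=; rewrite mulrA. Qed.

Lemma Kspace_mulset (K U : {set L}) c : Kspace K U -> Kspace K (mulset U c).
Proof.
case=> h0 hD hM; split.
- by apply/imsetP; exists 0 => //; rewrite mul0r.
- move=> _ _ /imsetP [x hx ->] /imsetP [y hy ->]; apply/imsetP.
  by exists (x + y); [apply: (hD) | rewrite mulrDl].
- move=> d _ hd /imsetP [x hx ->]; apply/imsetP.
  by exists (d * x); [apply: (hM) | rewrite mulrA].
Qed.

Lemma Kspace_subset (K K' U : {set L}) : K' \subset K -> Kspace K U -> Kspace K' U.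
Proof. by move=> hs [h0 hD hM]; split => // c x hc; apply: (hM); apply: (subsetP hs). Qed.

Lemma Kspace_setI (K X Y : {set L}) : Kspace K X -> Kspace K Y -> Kspace K (X :&: Y).
Proof.
move=> [h0 hD hM] [h0' hD' hM']; split; first by rewrite inE h0 h0'.
  by move=> x y /setIP [hx hx'] /setIP [hy hy']; rewrite inE hD ?hD'.
by move=> c x hc /setIP [hx hx']; rewrite inE hM ?hM'.
Qed.

Lemma mulset_Kspace_id (K U : {set L}) c : Kspace K U -> c \in K -> c != 0 ->
  mulset U c = U.
Proof.
move=> [h0 hD hM] hc hc0; apply/eqP; rewrite eqEcard card_mulset // leqnn andbT.
by apply/subsetP => _ /imsetP [x hx ->]; rewrite mulrC; apply: (hM).
Qed.

Lemma card_Kspace_adjoin a' (W V : {set L}) y :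
  Kspace (Fsub L q a') W -> y \notin W ->
  (forall w c, w \in W -> c \in Fsub L q a' -> w + c * y \in V) ->
  (#|W| * #|Fsub L q a'| <= #|V|)%N.
Proof.
move=> [h0 hD hM] hy hsub.
have inj : {in setX W (Fsub L q a') &, injective (fun p : L * L => p.1 + p.2 * y)}.
  move=> [w c] [w' c'] /setXP [hw hc] /setXP [hw' hc'] /= e.
  have hcc : c = c'.
    apply/eqP; apply/negPn/negP => hne; move/negP: hy; apply.
    have e2 : (c - c') * y = w' - w.
      apply/eqP; rewrite -subr_eq0; apply/eqP.
      transitivity ((w + c * y) - (w' + c' * y)); first ring.
      by rewrite e subrr.
    have -> : y = (c - c')^-1 * (w' - w) by rewrite -e2 mulrA mulVf ?mul1r // subr_eq0.
    apply: (hM); first by rewrite FsubV // FsubB.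
    by apply: (hD) => //; rewrite -mulN1r; apply: (hM) => //; exact: FsubN1.
  by rewrite hcc in e *; move/addIr: e => ->.
rewrite -cardsX -(card_in_imset inj); apply: subset_leq_card.
by apply/subsetP => _ /imsetP [[w c] /setXP [hw hc] ->]; apply: hsub.
Qed.

Lemma sdim_geq (A : {set L}) t : (q ^ t <= #|A|)%N -> (t <= sdim q A)%N.
Proof. by move=> h; apply: trunc_log_max. Qed.

Lemma sdim_leq (A B : {set L}) t : A \subset B -> #|B| = (q ^ t)%N -> (sdim q A <= t)%N.
Proof.
move=> hs hB; rewrite /sdim -(trunc_expnK t hq) -hB.
exact: leq_trunc_log (subset_leq_card hs).
Qed.

Lemma exists_notin_eq_card (A B : {set L}) : #|A| = #|B| -> A != B ->
  exists2 y, y \in B & y \notin A.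
Proof.
move=> cAB hAB; have : ~~ (B \subset A).
  by apply: contra hAB => hBA; rewrite eq_sym eqEcard hBA cAB leqnn.
by case/subsetPn => y hy hny; exists y.
Qed.

(* For y in Y \ X and x in X \ Y, X + Y contains X + K y and X contains
   (X :&: Y) + K x, so the sum has dimension >= s + a' and the intersection
   <= s - a'. *)
Lemma dS_Kspace_geq a' (X Y : {set L}) s :
  (0 < a')%N -> (a' %| n)%N -> (a' <= s)%N ->
  Kspace (Fsub L q a') X -> Kspace (Fsub L q a') Y ->
  #|X| = (q ^ s)%N -> #|Y| = (q ^ s)%N -> X != Y -> (2 * a' <= dS q X Y)%N.
Proof.
move=> ha hadn has hX hY cX cY hne.
have [h0X hDX hMX] := hX; have [h0Y hDY hMY] := hY.
have [y hyY hyX] := exists_notin_eq_card (etrans cX (esym cY)) hne.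
have [x hxX hxY] := exists_notin_eq_card (etrans cY (esym cX)) (contra_neq esym hne).
have hsum : (s + a' <= sdim q (addS X Y))%N.
  apply: sdim_geq; rewrite expnD -cX -(card_Fsub ha hadn).
  apply: card_Kspace_adjoin hX hyX _ => w c hw hc; apply/imset2P; exists w (c * y) => //.
  exact: hMY.
have hcap : (sdim q (X :&: Y) <= s - a')%N.
  have hxI : x \notin X :&: Y by rewrite inE negb_and hxY orbT.
  have hsub w c : w \in X :&: Y -> c \in Fsub L q a' -> w + c * x \in X.
    by move=> /setIP [hw _] hc; apply: hDX => //; apply: hMX.
  have := card_Kspace_adjoin (Kspace_setI hX hY) hxI hsub.
  rewrite cX card_Fsub // => hc.
  have hc' : (#|X :&: Y| <= q ^ (s - a'))%N.
    by rewrite -(@leq_pmul2r (q ^ a')) ?expn_gt0 ?(ltnW hq) // -expnD subnK.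
  rewrite leqNgt; apply/negP => hlt.
  have hpos : (0 < #|X :&: Y|)%N by apply/card_gt0P; exists 0; rewrite inE h0X h0Y.
  have := leq_trans (leq_trans (leq_pexp2l (ltnW hq) hlt) (trunc_logP hq hpos)) hc'.
  by rewrite leq_exp2l // ltnn.
by rewrite /dS; apply: leq_trans (leq_sub hsum hcap); lia.
Qed.

Lemma dS_leq (X Y A B : {set L}) t0 t1 :
  addS X Y \subset A -> #|A| = (q ^ t1)%N -> B \subset X :&: Y -> #|B| = (q ^ t0)%N ->
  (dS q X Y <= t1 - t0)%N.
Proof.
move=> hA cA hB cB; rewrite /dS; apply: leq_sub; first exact: sdim_leq hA cA.
by apply: sdim_geq; rewrite -cB; apply: subset_leq_card.
Qed.

Lemma dS_Kspace_id (K U : {set L}) : Kspace K U -> dS q U U = 0%N.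
Proof.
move=> [h0 hD hM]; apply/eqP; rewrite /dS setIid subn_eq0 /sdim.
apply: leq_trunc_log; apply: subset_leq_card; apply/subsetP => _ /imset2P [x y hx hy ->].
exact: hD.
Qed.

Section Flag.
Variable k : nat.
Variable m : nat -> nat.
Hypothesis hk : (0 < k)%N.
Hypothesis hm1 : (0 < m 1%N)%N.
Hypothesis hmn : m k.+1 = n.
Hypothesis hlt : forall i, (1 <= i <= k)%N -> (m i < m i.+1)%N.
Hypothesis hdvd : forall i, (1 <= i <= k)%N -> (m i %| m i.+1)%N.

Local Notation F := (theFlag q n k m alpha).
Local Notation Lr i := (m i.+1 %/ m i)%N.

Definition beta i := alpha_i q n alpha (m i.+1).
Definition block i := [seq Fij q (m i) (beta i) j | j <- iota 1 (Lr i - 1)].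

Lemma theFlagE : F = flatten [seq block i | i <- iota 1 k].
Proof. by []. Qed.

Lemma m_dvdn i j : (1 <= i)%N -> (i <= j)%N -> (j <= k.+1)%N -> (m i %| m j)%N.
Proof.
move=> h1 hij; rewrite -(subnKC hij); elim: (j - i)%N => [|d IH] hd.
  by rewrite addn0.
apply: dvdn_trans (IH (ltnW _)) _; first by rewrite addnS in hd.
rewrite addnS; apply: hdvd; rewrite addnS ltnS in hd.
by rewrite hd andbT; lia.
Qed.

Lemma m_ltn i j : (1 <= i)%N -> (i < j)%N -> (j <= k.+1)%N -> (m i < m j)%N.
Proof.
move=> h1 hij; rewrite -(subnKC hij); elim: (j - i.+1)%N => [|d IH] hd.
  by rewrite addn0 in hd *; apply: hlt; rewrite h1 -ltnS.
apply: ltn_trans (IH (ltnW _)) _; first by rewrite addnS in hd.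
rewrite addnS; apply: hlt; rewrite addnS ltnS in hd.
by rewrite hd andbT; lia.
Qed.

Lemma m_gt0 i : (1 <= i)%N -> (i <= k.+1)%N -> (0 < m i)%N.
Proof.
move=> h1 h2; case: i h1 h2 => [//|[_ _|i h1 h2]]; first exact: hm1.
exact: leq_ltn_trans (m_ltn (leqnn 1) _ h2).
Qed.

Lemma m_leq i j : (1 <= i)%N -> (i <= j)%N -> (j <= k.+1)%N -> (m i <= m j)%N.
Proof.
move=> h1 h2 h3; apply: dvdn_leq; last exact: m_dvdn.
by apply: m_gt0 h3; apply: leq_trans h2.
Qed.

Lemma mi_gt0 i : (1 <= i <= k)%N -> (0 < m i)%N.
Proof. by case/andP => h1 h2; apply: m_gt0 h1 (leqW h2). Qed.

Lemma m_dvdn_n i : (1 <= i)%N -> (i <= k.+1)%N -> (m i %| n)%N.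
Proof. by move=> h1 h2; rewrite -hmn; apply: m_dvdn. Qed.

Lemma Lr_mul i : (1 <= i <= k)%N -> (Lr i * m i)%N = m i.+1.
Proof. by move=> h; rewrite divnK // hdvd. Qed.

Lemma Lr_ge2 i : (1 <= i <= k)%N -> (2 <= Lr i)%N.
Proof.
move=> h; have := hlt h; have := Lr_mul h; set l := Lr i => e; rewrite -e.
by case: l {e} => [|[|l]]; rewrite ?mul0n ?mul1n ?ltn0 ?ltnn.
Qed.

Lemma m_mul_ltn i j : (1 <= i <= k)%N -> (j < Lr i)%N -> (m i * j < m i.+1)%N.
Proof. by move=> hi hj; rewrite -(Lr_mul hi) mulnC ltn_pmul2r // mi_gt0. Qed.

Lemma mem_iota1 i : (i \in iota 1 k) = (1 <= i <= k)%N.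
Proof. by rewrite mem_iota add1n ltnS. Qed.

Lemma mem_iotaLr i j : (1 <= i <= k)%N -> (j \in iota 1 (Lr i - 1)) = (1 <= j < Lr i)%N.
Proof.
move=> hi; rewrite mem_iota add1n subn1 prednK //.
exact: leq_trans (Lr_ge2 hi).
Qed.

Lemma mem_theFlag U : U \in F <-> exists i j,
  [/\ (1 <= i <= k)%N, (1 <= j < Lr i)%N & U = Fij q (m i) (beta i) j].
Proof.
split.
  move=> /flattenP [s /mapP [i hi ->] /mapP [j hj ->]].
  by rewrite mem_iota1 in hi; exists i, j; rewrite -mem_iotaLr.
move=> [i [j [hi hj ->]]]; apply/flattenP; exists (block i).
  by apply/mapP; exists i; rewrite ?mem_iota1.
by apply/mapP; exists j; rewrite ?mem_iotaLr.
Qed.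

Lemma card_Fij_flag i j : (1 <= i <= k)%N -> (j <= Lr i)%N ->
  #|Fij q (m i) (beta i) j| = (q ^ (m i * j))%N.
Proof.
move=> hi hj; have [h1 h2] := andP hi.
apply: card_Fij => //; [exact: mi_gt0 | exact: m_gt0 | exact: hdvd | exact: m_dvdn_n].
Qed.

Lemma Fsub_m_subset i i' : (1 <= i')%N -> (i' <= i)%N -> (i <= k.+1)%N ->
  Fsub L q (m i') \subset Fsub L q (m i).
Proof. by move=> h1 h2 h3; apply: Fsub_subset; apply: m_dvdn. Qed.

Lemma exp_beta_Fsub i t : (1 <= i <= k)%N -> beta i ^+ t \in Fsub L q (m i.+1).
Proof.
move=> /andP [h1 h2]; rewrite /beta /alpha_i -exprM exp_alpha_Fsub ?dvdn_mulr //.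
  exact: m_gt0.
exact: m_dvdn_n.
Qed.

Lemma theFlag_Kspace U : U \in F -> Kspace (Fsub L q (m 1)) U.
Proof.
move=> /mem_theFlag [i [j [/andP [h1 h2] _ ->]]]; apply: Kspace_subset (Fij_Kspace _ _ j).
by apply: Fsub_m_subset => //; exact: leqW.
Qed.

Lemma theFlag_subspace : all (subspace q) F.
Proof.
apply/allP => U /theFlag_Kspace [h0 hD hM]; apply/and3P; split => //.
  by apply/forall_inP => x hx; apply/forall_inP => y hy; apply: hD.
apply/forall_inP => c hc; apply/forall_inP => x hx; apply: hM => //.
exact: (subsetP (Fsub_subset (dvd1n (m 1)))).
Qed.

Lemma theFlag_neq0 : all (fun U => U != [set 0]) F.
Proof.
apply/allP => U /mem_theFlag [i [j [hi /andP [hj1 hj] ->]]].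
apply/negP => /eqP e; have := exp_Fij (m i) (beta i) hj1.
by rewrite expr0 e inE oner_eq0.
Qed.

Lemma theFlag_neqT : all (fun U => U != [set: L]) F.
Proof.
apply/allP => U /mem_theFlag [i [j [hi /andP [hj1 hj] ->]]].
apply/negP => /eqP e; have := card_Fij_flag hi (ltnW hj); rewrite e cardsT hL => /eqP.
rewrite eqn_exp2l // => /eqP e2; have [h1 h2] := andP hi.
have := leq_trans (m_mul_ltn hi hj) (dvdn_leq hn (m_dvdn_n (ltn0Sn i) h2)).
by rewrite e2 ltnn.
Qed.

Lemma block_last i : (1 <= i <= k)%N ->
  last set0 (block i) = Fij q (m i) (beta i) (Lr i - 1).
Proof.
move=> hi; rewrite /block -(subnK (_ : 1 <= Lr i - 1)%N).
  by rewrite addn1 last_map_iota add1n.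
by rewrite subn_gt0; apply: leq_trans (Lr_ge2 hi).
Qed.

Lemma block_head i : (1 <= i <= k)%N -> block i = Fsub L q (m i) :: behead (block i).
Proof.
move=> hi; rewrite /block -(subnK (_ : 1 <= Lr i - 1)%N).
  by rewrite addn1 /= Fij1.
by rewrite subn_gt0; apply: leq_trans (Lr_ge2 hi).
Qed.

Lemma block_sorted i : (1 <= i <= k)%N -> sorted (fun U V : {set L} => U \proper V) (block i).
Proof.
move=> hi; rewrite /block sorted_map; apply: sorted_iota => j _ h2 /=.
have hL0 : (0 < Lr i)%N by apply: leq_trans (Lr_ge2 hi).
have hj : (j.+1 <= Lr i)%N by move: h2; rewrite add1n subn1 prednK // => /ltnW.
rewrite properEcard Fij_subset //= (card_Fij_flag hi hj) (card_Fij_flag hi (ltnW hj)).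
by rewrite ltn_exp2l // ltn_pmul2l // mi_gt0.
Qed.

(* beta_i lies in F_{q^{m_{i+1}}} = F^{i+1}_1. *)
Lemma block_last_proper i : (1 <= i < k)%N ->
  last set0 (block i) \proper head set0 (block i.+1).
Proof.
move=> hik; have hi : (1 <= i <= k)%N by lia.
have hi' : (1 <= i.+1 <= k)%N by lia.
rewrite block_last // (block_head hi') /= properEcard; apply/andP; split.
  apply: Fij_min => [|t _]; last exact: exp_beta_Fsub.
  split; [exact: Fsub0 | exact: FsubD |].
  move=> c x hc; apply: FsubM; apply: (subsetP (@Fsub_m_subset i.+1 i _ _ _)) hc; lia.
rewrite (card_Fij_flag hi (leq_subr _ _)) card_Fsub; last 2 first.
- by apply: m_gt0; lia.
- by apply: m_dvdn_n; lia.
rewrite ltn_exp2l // m_mul_ltn // subn1 prednK //.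
exact: leq_trans (Lr_ge2 hi).
Qed.

Lemma theFlag_sorted : sorted (fun U V : {set L} => U \proper V) F.
Proof.
rewrite theFlagE; apply: (@sorted_flatten _ set0).
  apply/allP => _ /mapP [i hi ->]; rewrite mem_iota1 in hi.
  rewrite block_sorted //= -size_eq0 size_map size_iota subn_eq0 -ltnNge.
  exact: Lr_ge2.
rewrite sorted_map; apply: sorted_iota => i h1 h2 /=.
by apply: block_last_proper; lia.
Qed.

Lemma theFlag_type : type_of q F = theType k m.
Proof.
rewrite /type_of theFlagE map_flatten /theType -map_comp; congr flatten.
apply/eq_in_map => i; rewrite mem_iota1 => hi /=.
rewrite /block -map_comp; apply/eq_in_map => j; rewrite mem_iotaLr // => /andP [hj1 hj] /=.
by rewrite /sdim (card_Fij_flag hi (ltnW hj)) trunc_expnK // mulnC.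
Qed.

(* The dimensions m_{i'} j with 1 <= j < L_{i'+1} are pairwise distinct and
   hit m_i only at F^i_1 = F_{q^{m_i}}. *)
Lemma theFlag_dim i : (1 <= i <= k)%N ->
  (exists2 U, U \in F & sdim q U = m i) /\
  (forall U, U \in F -> sdim q U = m i -> U = Fsub L q (m i)).
Proof.
move=> hi; have hL2 := Lr_ge2 hi; have [h1 h2] := andP hi.
split.
  exists (Fij q (m i) (beta i) 1).
    by apply/mem_theFlag; exists i, 1%N; split => //; rewrite leqnn (leq_trans _ hL2).
  by rewrite /sdim (card_Fij_flag hi (ltnW hL2)) trunc_expnK // muln1.
move=> U /mem_theFlag [i' [j [hi' /andP [hj1 hj] ->]]].
rewrite /sdim (card_Fij_flag hi' (ltnW hj)) trunc_expnK // => e.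
have [h1' h2'] := andP hi'.
case: (ltngtP i' i) => hii.
- have := m_leq (leq_trans h1' (leqnSn _)) hii (leqW h2).
  by rewrite leqNgt -e m_mul_ltn.
- have := m_ltn h1 hii (leqW h2'); rewrite -e => hc.
  by have := leq_ltn_trans (leq_pmulr _ hj1) hc; rewrite ltnn.
- subst i'; have : j = 1%N by apply/eqP; rewrite -(eqn_pmul2l (mi_gt0 hi)) muln1 e.
  by move=> ->; rewrite Fij1.
Qed.

Lemma theFlag_generalizes : (exists2 U, U \in F & ~~ is_subfield U) ->
  generalizes q F [seq m i | i <- iota 1 k].
Proof.
move=> H; split => //; rewrite -map_comp theFlagE.
apply: subseq_map_heads => i; rewrite mem_iota1 => hi.
by exists (behead (block i)); rewrite {1}(block_head hi).
Qed.

Let hk1 : (1 <= 1 <= k)%N := hk.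
Let m1_dvdn_n : (m 1 %| n)%N := m_dvdn_n (leqnn 1) (ltn0Sn k).

Lemma Fsub_m1_in_theFlag : Fsub L q (m 1) \in F.
Proof.
apply/mem_theFlag; exists 1%N, 1%N; split; rewrite ?Fij1 //.
by rewrite leqnn (leq_trans _ (Lr_ge2 hk1)).
Qed.

Lemma theFlag_best_friend : best_friend q n F (m 1).
Proof.
split => //.
- apply/allP => U hU; apply/andP; split; first exact: (allP theFlag_subspace).
  have [_ _ hM] := theFlag_Kspace hU.
  by apply/forall_inP => c hc; apply/forall_inP => x hx; apply: hM.
- move=> m' hm' /allP h; have /andP [_ /forall_inP hf] := h _ Fsub_m1_in_theFlag.
  have hm'0 : (0 < m')%N.
    by case: m' hm' {h hf} => //; rewrite dvd0n => /eqP e; move: hn; rewrite e.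
  have sub : Fsub L q m' \subset Fsub L q (m 1).
    apply/subsetP => c hc; have /forall_inP /(_ 1 (Fsub1 _)) := hf c hc.
    by rewrite mulr1.
  by have := subset_leq_card sub; rewrite !card_Fsub // leq_exp2l.
Qed.

Lemma flag_mul_Fsub_m1 c u : c \in Fsub L q (m 1) -> c != 0 ->
  flag_mul F (c * u) = flag_mul F u.
Proof.
move=> hc hc0; apply/eq_in_map => U hU /=.
have := mulsetM U c u; rewrite /mulset => ->.
by have := mulset_Kspace_id (theFlag_Kspace hU) hc hc0; rewrite /mulset => ->.
Qed.

Local Notation N1 := (unit_index (m 1)).

Lemma flag_mul_mod j : flag_mul F (alpha ^+ j) = flag_mul F (alpha ^+ (j %% N1)).
Proof.
rewrite {1}(divn_eq j N1) exprD (mulnC _ N1) flag_mul_Fsub_m1 ?exp_alpha_neq0 //.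
by rewrite exp_alpha_Fsub ?dvdn_mulr.
Qed.

Lemma theFlag_split : F = block 1 ++ flatten [seq block i | i <- iota 2 k.-1].
Proof. by rewrite theFlagE -{1}(prednK hk). Qed.

Lemma theFlag_head :
  F = Fsub L q (m 1) :: (behead (block 1) ++ flatten [seq block i | i <- iota 2 k.-1]).
Proof. by rewrite theFlag_split {1}(block_head hk1). Qed.

(* The first member of F alpha^a is the coset K_1 alpha^a. *)
Lemma flag_mul_exp_inj a b : (a < N1)%N -> (b < N1)%N ->
  flag_mul F (alpha ^+ a) = flag_mul F (alpha ^+ b) -> a = b.
Proof.
wlog hab : a b / (b <= a)%N.
  move=> W ha hb e; case: (leqP b a) => h; first exact: W.
  by symmetry; apply: W => //; exact: ltnW.
move=> ha hb; rewrite theFlag_head /= => -[e1 _].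
have : alpha ^+ a \in mulset (Fsub L q (m 1)) (alpha ^+ b).
  by rewrite /mulset -e1; apply/imsetP; exists 1; rewrite ?mul1r ?Fsub1.
case/imsetP => x hx hxe.
have hx' : x = alpha ^+ (a - b).
  by apply: (mulIf (exp_alpha_neq0 b)); rewrite -hxe -exprD subnK.
move: hx; rewrite hx' exp_alpha_Fsub // => hd.
case: (posnP (a - b)) => h0; first by apply/eqP; rewrite eqn_leq hab -subn_eq0 h0.
have := dvdn_leq h0 hd; rewrite leqNgt => /negP; case.
exact: leq_ltn_trans (leq_subr _ _) ha.
Qed.

Lemma theFlag_orb_card : orb_card F alpha N1.
Proof.
exists [seq flag_mul F (alpha ^+ j) | j <- iota 0 N1]; split.
- rewrite map_inj_in_uniq ?iota_uniq // => a b; rewrite !mem_iota !add0n => ha hb.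
  exact: flag_mul_exp_inj.
- move=> G; split; first by move=> /mapP [j _ ->]; exists j.
  move=> [j ->]; apply/mapP; exists (j %% N1)%N; last exact: flag_mul_mod.
  by rewrite mem_iota add0n ltn_pmod // unit_index_gt0.
- by rewrite size_map size_iota.
Qed.

Local Notation W j := (Fij q (m 1) (beta 1) j).

Let m2_gt0 : (0 < m 2)%N := m_gt0 (ltn0Sn 1) hk.
Let m1_dvdn_m2 : (m 1 %| m 2)%N := hdvd hk1.
Let m2_dvdn_n : (m 2 %| n)%N := m_dvdn_n (ltn0Sn 1) hk.
Let beta1_neq0 : beta 1 != 0 := exp_alpha_neq0 _.

Lemma beta1_notin_Fsub : beta 1 \notin Fsub L q (m 1).
Proof. exact: beta_notin_Fsub hm1 m2_gt0 m1_dvdn_m2 m2_dvdn_n (Lr_ge2 hk1). Qed.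

Lemma block1_stabilizer j c : (1 <= j < Lr 1)%N -> mulset (W j) c \subset W j ->
  c \in Fsub L q (m 1).
Proof.
by move=> /andP [hj1 hj] hsub; exact: (Fij_stabilizer hm1 m2_gt0 m1_dvdn_m2 m2_dvdn_n hj1 hj hsub).
Qed.

Lemma beta1_Fsub i : (2 <= i <= k)%N -> beta 1 \in Fsub L q (m i).
Proof.
move=> hi; have := exp_beta_Fsub 1 hk1; rewrite expr1.
by apply: (subsetP (Fsub_m_subset _ _ _)); lia.
Qed.

Lemma mem_block1 U : U \in block 1 -> exists2 j, (1 <= j < Lr 1)%N & U = W j.
Proof. by move=> /mapP [j hj ->]; exists j; rewrite -?mem_iotaLr. Qed.

Lemma mem_blocks_tail U : U \in flatten [seq block i | i <- iota 2 k.-1] ->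
  exists i j, [/\ (2 <= i <= k)%N, (1 <= j < Lr i)%N & U = Fij q (m i) (beta i) j].
Proof.
move=> /flattenP [s /mapP [i hi ->] /mapP [j hj ->]].
have hi' : (2 <= i <= k)%N by move: hi; rewrite mem_iota; lia.
by exists i, j; split => //; rewrite -mem_iotaLr //; lia.
Qed.

Lemma dist_block1_sum : (2 * (m 2 - m 1) = \sum_(U <- block 1) 2 * m 1)%N.
Proof.
rewrite big_const_seq count_predT iter_addn_0 size_map size_iota.
have e := Lr_mul hk1; set l := Lr 1 in e *; rewrite -e; nia.
Qed.

Lemma Fij_mulbeta j z : z \in W j -> z * beta 1 \in W j.+1.
Proof.
move=> hz; set V := [set x | x * beta 1 \in W j.+1].
have memV x : (x \in V) = (x * beta 1 \in W j.+1) by rewrite in_set.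
suff /subsetP/(_ _ hz) : W j \subset V by rewrite memV.
apply: Fij_min => [|t ht]; last by rewrite memV -exprSr exp_Fij.
have [h0 hD hM] := Fij_Kspace (m 1) (beta 1) j.+1.
split; first by rewrite memV mul0r.
  by move=> x y; rewrite !memV mulrDl; exact: hD.
by move=> c x hc; rewrite !memV -mulrA; exact: hM.
Qed.

(* Translates of F^1_j are K_1-spaces of dimension j m_1. *)
Lemma dS_block1_geq j c c' : (1 <= j < Lr 1)%N -> c != 0 -> c' != 0 ->
  mulset (W j) c != mulset (W j) c' ->
  (2 * m 1 <= dS q (mulset (W j) c) (mulset (W j) c'))%N.
Proof.
move=> /andP [hj1 hj] hc hc' hne.
have hWj := card_Fij_flag hk1 (ltnW hj).
apply: (@dS_Kspace_geq (m 1) _ _ (m 1 * j)) => //; rewrite ?card_mulset ?leq_pmulr //.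
- exact: Kspace_mulset (Fij_Kspace _ _ j).
- exact: Kspace_mulset (Fij_Kspace _ _ j).
Qed.

(* F^1_j and beta_1 F^1_j both contain beta_1 F^1_{j-1} and lie in F^1_{j+1}. *)
Lemma dS_block1_beta_leq j : (1 <= j < Lr 1)%N ->
  (dS q (W j) (mulset (W j) (beta 1)) <= 2 * m 1)%N.
Proof.
move=> /andP [hj1 hj].
apply: leq_trans (@dS_leq _ _ (W j.+1) (mulset (W j.-1) (beta 1))
                     (m 1 * j.-1) (m 1 * j.+1) _ _ _ _) _.
- apply/subsetP => _ /imset2P [x _ hx /imsetP [y hy ->] ->].
  have [_ hD _] := Fij_Kspace (m 1) (beta 1) j.+1.
  by apply: hD; [exact: (subsetP (Fij_subset _ _ (leqnSn j))) | exact: Fij_mulbeta].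
- exact: card_Fij_flag hk1 hj.
- apply/subsetP => _ /imsetP [y hy ->]; rewrite inE; apply/andP; split.
    by have := Fij_mulbeta hy; rewrite prednK.
  by apply: imset_f; apply: (subsetP (Fij_subset _ _ (leq_pred j))) hy.
- rewrite card_mulset // card_Fij_flag //.
  exact: leq_trans (leq_pred j) (ltnW hj).
- by rewrite -(prednK hj1) mulnS mulnSr; lia.
Qed.

Lemma dS_block1_beta j : (1 <= j < Lr 1)%N ->
  dS q (mulset (W j) 1) (mulset (W j) (beta 1)) = (2 * m 1)%N.
Proof.
move=> hj; apply/eqP; rewrite eqn_leq dS_block1_geq ?oner_neq0 //.
  by rewrite mulset1 dS_block1_beta_leq.
rewrite mulset1; apply/eqP => e; move/negP: beta1_notin_Fsub; apply.
by apply: block1_stabilizer hj _; rewrite -e.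
Qed.

Lemma flag_mul_block1_eq j a b : (1 <= j < Lr 1)%N ->
  mulset (W j) (alpha ^+ a) = mulset (W j) (alpha ^+ b) ->
  flag_mul F (alpha ^+ a) = flag_mul F (alpha ^+ b).
Proof.
move=> hj e; set c := alpha ^+ b / alpha ^+ a.
have hsub : mulset (W j) c \subset W j.
  apply/subsetP => _ /imsetP [x hx ->].
  have : x * alpha ^+ b \in mulset (W j) (alpha ^+ a) by rewrite e; apply: imset_f.
  by case/imsetP => y hy hxy; rewrite /c mulrA hxy mulfK ?exp_alpha_neq0.
have -> : alpha ^+ b = c * alpha ^+ a by rewrite /c divfK ?exp_alpha_neq0.
by rewrite flag_mul_Fsub_m1 ?(block1_stabilizer hj) // mulf_neq0 ?invr_neq0 ?exp_alpha_neq0.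
Qed.

Lemma df_orbit_geq a b : flag_mul F (alpha ^+ a) <> flag_mul F (alpha ^+ b) ->
  (2 * (m 2 - m 1) <= df q (flag_mul F (alpha ^+ a)) (flag_mul F (alpha ^+ b)))%N.
Proof.
move=> hne; rewrite /flag_mul df_map theFlag_split big_cat /=.
apply: leq_trans (leq_addr _ _).
rewrite dist_block1_sum big_seq [X in (_ <= X)%N]big_seq; apply: leq_sum => U hU.
have [j hj ->] := mem_block1 hU.
apply: dS_block1_geq; rewrite ?exp_alpha_neq0 //.
by apply/eqP => e; apply: hne; exact: flag_mul_block1_eq hj e.
Qed.

Lemma flag_mul1 : flag_mul F 1 = F.
Proof. by rewrite -[RHS]map_id; apply/eq_map => U; exact: mulset1. Qed.

(* The blocks i >= 2 are F_{q^{m_i}}-spaces, hence invariant under beta_1. *)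
Lemma df_theFlag_beta : df q F (flag_mul F (beta 1)) = (2 * (m 2 - m 1))%N.
Proof.
rewrite -{1}flag_mul1 /flag_mul df_map theFlag_split big_cat /=.
rewrite [X in (_ + X)%N]big1_seq ?addn0; last first.
  move=> U /= hU; have [i [j [hi hj ->]]] := mem_blocks_tail hU.
  have := mulset_Kspace_id (Fij_Kspace _ _ j) (beta1_Fsub hi) beta1_neq0.
  rewrite /mulset => ->; have := mulset1 (Fij q (m i) (beta i) j); rewrite /mulset => ->.
  exact: dS_Kspace_id (Fij_Kspace _ _ j).
rewrite dist_block1_sum big_seq [in RHS]big_seq; apply: eq_bigr => U hU.
by have [j hj ->] := mem_block1 hU; apply: dS_block1_beta.
Qed.

Lemma theFlag_min_dist : orb_min_dist q F alpha (2 * (m 2 - m 1)).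
Proof.
split; last by move=> G G' [a ->] [b ->]; apply: df_orbit_geq.
exists F, (flag_mul F (beta 1)); split.
- by exists 0%N; rewrite expr0 flag_mul1.
- by exists (unit_index (m 2)).
- rewrite theFlag_head /flag_mul /= => -[e1 _]; move/negP: beta1_notin_Fsub; apply.
  by rewrite e1; apply/imsetP; exists 1; rewrite ?mul1r ?Fsub1.
- exact: df_theFlag_beta.
Qed.

End Flag.
End FiniteField.

Theorem mainTheorem10 (L : finFieldType) (q n k : nat) (m : nat -> nat)
    (alpha : L)
    (hq : (1 < q)%N) (hL : #|L| = (q ^ n)%N)
    (hk : (0 < k)%N) (hm1 : (0 < m 1%N)%N) (hmn : m k.+1 = n)
    (hlt : forall i, (1 <= i <= k)%N -> (m i < m i.+1)%N)
    (hdvd : forall i, (1 <= i <= k)%N -> (m i %| m i.+1)%N)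
    (halpha : primitive alpha) :
  let F := theFlag q n k m alpha in
  (is_flag q F /\ type_of q F = theType k m) /\
  [/\
      (forall i, (1 <= i <= k)%N ->
         (exists2 U, U \in F & sdim q U = m i) /\
         (forall U, U \in F -> sdim q U = m i -> U = Fsub L q (m i))),
      ((exists2 U, U \in F & ~~ is_subfield U) ->
         generalizes q F [seq m i | i <- iota 1 k]),
      best_friend q n F (m 1%N),
      orb_card F alpha ((q ^ n - 1) %/ (q ^ m 1%N - 1))
    & orb_min_dist q F alpha (2 * (m 2 - m 1))%N].
Proof.
(* n > 1 since 0 < m_k < n with m_k dividing n. *)
have hn1 : (1 < n)%N.
  have hkk : (1 <= k <= k)%N by rewrite hk leqnn.
  by move: (hlt k hkk) (hdvd k hkk); rewrite hmn; case: (m k) => [|?]; rewrite ?dvd0n; lia.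
move=> F; split; first split.
- by apply/and4P; split;
    [apply: theFlag_subspace | apply: theFlag_neq0 | apply: theFlag_neqT | apply: theFlag_sorted].
- exact: theFlag_type.
split.
- exact: theFlag_dim.
- exact: theFlag_generalizes.
- exact: theFlag_best_friend.
- exact: theFlag_orb_card.
- exact: theFlag_min_dist.
Qed.
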